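(* Fix an integer $k\geq1$ and $V=\{0,\ldots,k\}$. Let $\varphi$ be a Boolean function on $V$ and let $\nu\neq\nu'$ be two valuations such that there is a simple path $\nu=\nu_0-\nu_1-\cdots-\nu_{n+1}=\nu'$ in $\mathbf G_V$ with $n\geq0$ and $\nu_i\notin\mathrm{sat}(\varphi)$ for all $1\leq i\leq n$. Then: (Chainkilling) if $(-1)^{|\nu|}\neq(-1)^{|\nu'|}$ (i.e., $n$ is even) and $\{\nu,\nu'\}\subseteq\mathrm{sat}(\varphi)$, then, defining $\varphi'$ by $\mathrm{sat}(\varphi')=\mathrm{sat}(\varphi)\setminus\{\nu,\nu'\}$, we have $\varphi\simeq\varphi'$ (more precisely $\varphi$ can be transformed into $\varphi'$ by a finite sequence of $\xrightarrow{\pm}$ steps); (Chainswapping) if $(-1)^{|\nu|}=(-1)^{|\nu'|}$ (i.e., $n$ is odd), $\nu\in\mathrm{sat}(\varphi)$ and $\nu'\notin\mathrm{sat}(\varphi)$, then, defining $\varphi'$ by $\mathrm{sat}(\varphi')=(\mathrm{sat}(\varphi)\setminus\{\nu\})\cup\{\nu'\}$, $\varphi$ can be transformed into $\varphi'$ by a finite sequence of $\xrightarrow{\pm}$ steps.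
   Context: A valuation is a subset $\nu\subseteq V$; $\nu^{(l)}$ is $\nu$ with membership of $l$ flipped. A Boolean function on $V$ is a map $\varphi:2^V\to\{\text{false},\text{true}\}$; $\mathrm{sat}(\varphi)$ is its set of satisfying valuations. $\mathbf G_V$ is the undirected graph with vertex set $2^V$ and edges $\{\nu,\nu^{(l)}\}$ for $\nu\subseteq V$, $l\in V$. Write $\varphi\xrightarrow{+(\nu,l)}\varphi'$ if $\nu,\nu^{(l)}\notin\mathrm{sat}(\varphi)$ and $\mathrm{sat}(\varphi')=\mathrm{sat}(\varphi)\cup\{\nu,\nu^{(l)}\}$, and $\varphi\xrightarrow{-(\nu,l)}\varphi'$ if $\varphi'\xrightarrow{+(\nu,l)}\varphi$. Write $\varphi\xrightarrow{\pm}\varphi'$ if one of these holds for some $\nu,l$; $\simeq$ is the reflexive-transitive closure of $\xrightarrow{\pm}$. *)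

From mathcomp Require Import all_boot.
From Stdlib Require Import Relations.
Set Implicit Arguments. Unset Strict Implicit. Unset Printing Implicit Defensive.

(* Variables V = {0,...,k} = 'I_k.+1; valuations are subsets of V. *)
Definition valuation (k : nat) := {set 'I_k.+1}.

(* A Boolean function on V: a map 2^V -> bool (finite function, so that
   functions with the same satisfying set are equal). *)
Definition boolfun (k : nat) := {ffun valuation k -> bool}.

Definition sat k (phi : boolfun k) : {set valuation k} := [set nu | phi nu].

Definition flip k (nu : valuation k) (l : 'I_k.+1) : valuation k :=
  if l \in nu then nu :\ l else l |: nu.

Definition adjG k (nu mu : valuation k) : Prop := exists l, mu = flip nu l.

Definition plus_step k (phi phi' : boolfun k) (nu : valuation k) (l : 'I_k.+1) : Prop :=
  nu \notin sat phi /\ flip nu l \notin sat phi /\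
  sat phi' = sat phi :|: [set nu; flip nu l].

Definition pm_step k (phi phi' : boolfun k) : Prop :=
  exists nu l, plus_step phi phi' nu l \/ plus_step phi' phi nu l.

Definition pm_equiv k : relation (boolfun k) := clos_refl_trans _ (@pm_step k).

(* nu = nu_0 - nu_1 - ... - nu_{n+1} = nu' with inner = [nu_1; ...; nu_n]:
   a simple path in G_V. *)
Definition simple_path k (nu nu' : valuation k) (inner : seq (valuation k)) : Prop :=
  let s := nu :: rcons inner nu' in
  uniq s /\ (forall i, i.+1 < size s -> adjG (nth nu s i) (nth nu s i.+1)).

(* Adding or removing an edge of G_V lets a satisfying valuation x move two
   steps along a path of non-satisfying valuations x - v1 - v2: first add the
   edge {v1, v2}, then remove the edge {x, v1}.  Iterating moves x along any
   path of even length.  For chainswapping the path from nu to nu' has even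
   length n + 1; for chainkilling, nu is moved to nu_n, which is then removed
   together with its neighbour nu'.  The parity of |nu| alternates along a
   path, which converts the hypotheses on cardinalities into ones on n. *)

From mathcomp Require Import all_boot.
From Stdlib Require Import Relations.
Set Implicit Arguments.
Unset Strict Implicit.
Unset Printing Implicit Defensive.

Section ChainMoves.
Variable k : nat.
Implicit Types (S : {set valuation k}) (x y nu : valuation k).

Definition of_sat S : boolfun k := [ffun x => x \in S].

Lemma sat_ofK S : sat (of_sat S) = S.
Proof. by apply/setP => x; rewrite !inE ffunE. Qed.

Lemma satK (phi : boolfun k) : of_sat (sat phi) = phi.
Proof. by apply/ffunP => x; rewrite ffunE inE. Qed.

Definition adjb nu mu := [exists l, mu == flip nu l].

Lemma adjbP nu mu : reflect (adjG nu mu) (adjb nu mu).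
Proof. by apply: (iffP existsP) => -[l]; [move/eqP->|move->]; exists l. Qed.

Lemma simple_pathP nu nu' inner :
  simple_path nu nu' inner <->
  uniq (nu :: rcons inner nu') /\ path adjb nu (rcons inner nu').
Proof.
rewrite /simple_path; split=> -[uniq_s adj_s]; split=> //.
  by apply/(pathP nu) => i lt_i; apply/adjbP/adj_s; rewrite /= ltnS.
by move=> i lt_i; apply/adjbP/(pathP nu adj_s); rewrite -ltnS.
Qed.

Lemma odd_flip nu l : odd #|flip nu l| = ~~ odd #|nu|.
Proof.
rewrite /flip; case: ifP => nu_l; last by rewrite cardsU1 nu_l.
by rewrite [#|nu|](cardsD1 l) nu_l /= negbK.
Qed.

Lemma odd_last_path x p :
  path adjb x p -> odd #|last x p| = odd #|x| (+) odd (size p).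
Proof.
elim: p x => [|y p IHp] x /=; first by rewrite addbF.
case/andP => /existsP[l /eqP->] /IHp->.
by rewrite odd_flip; case: (odd #|x|); case: (odd (size p)).
Qed.

Lemma add_edge S x y : x \notin S -> y \notin S -> adjb x y ->
  pm_equiv (of_sat S) (of_sat (S :|: [set x; y])).
Proof.
move=> Sx Sy /existsP[l /eqP def_y]; subst y.
by apply: rt_step; exists x, l; left; rewrite /plus_step !sat_ofK.
Qed.

Lemma remove_edge S x y : x \in S -> y \in S -> adjb x y ->
  pm_equiv (of_sat S) (of_sat (S :\: [set x; y])).
Proof.
move=> Sx Sy /existsP[l /eqP def_y]; subst y.
apply: rt_step; exists x, l; right.
rewrite /plus_step !sat_ofK !inE !eqxx orbT; split=> //; split=> //.
rewrite setUC -{1}(setID S [set x; flip x l]) (setIidPr _) //.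
by apply/subsetP => z; rewrite !inE => /orP[]/eqP->.
Qed.

Lemma shift_token S x v1 v2 :
  x \in S -> v1 \notin S -> v2 \notin S -> uniq [:: x; v1; v2] ->
  adjb x v1 -> adjb v1 v2 ->
  pm_equiv (of_sat S) (of_sat (S :\ x :|: [set v2])).
Proof.
move=> Sx Sv1 Sv2 uniq_xv adj_x adj_v.
apply: rt_trans (add_edge Sv1 Sv2 adj_v) _.
have -> : S :\ x :|: [set v2] = (S :|: [set v1; v2]) :\: [set x; v1].
  move: uniq_xv; rewrite /= !inE !negb_or andbT.
  case/andP=> /andP[ne_xv1 ne_xv2] ne_v; apply/setP => z; rewrite !inE negb_or.
  have [->|_] := eqVneq z v2.
    by rewrite !orbT andbT (eq_sym v2 x) (eq_sym v2 v1) ne_xv2 ne_v.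
  have [->|ne_z1] := eqVneq z v1; first by rewrite (negbTE Sv1) !andbF.
  by rewrite !orbF andbT.
by apply: remove_edge adj_x; rewrite !inE ?Sx ?eqxx ?orbT.
Qed.

Lemma move_token_even S x p :
  x \in S -> path adjb x p -> uniq (x :: p) ->
  (forall y, y \in p -> y \notin S) -> ~~ odd (size p) ->
  pm_equiv (of_sat S) (of_sat (S :\ x :|: [set last x p])).
Proof.
move=> Sx path_p uniq_p p_notS even_p.
have [n size_p] : exists n, size p = n.*2.
  by exists (size p)./2; rewrite -[LHS]odd_double_half (negbTE even_p).
elim: n x S p {even_p} size_p Sx path_p uniq_p p_notS => [|n IHn] x S.
  by case=> // _ Sx _ _ _; rewrite setUC setD1K //; apply: rt_refl.
case=> [|v1 [|v2 p]] //= [size_p] Sx.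
case/and3P=> adj_x adj_v path_p uniq_xp p_notS.
have Sv1 := p_notS v1 (mem_head _ _).
have Sv2 : v2 \notin S by apply: p_notS; rewrite !inE eqxx orbT.
have uniq_xv : uniq [:: x; v1; v2].
  move: uniq_xp; rewrite /= !inE !negb_or.
  by case/and4P=> /and3P[-> -> _] /andP[-> _].
apply: rt_trans (shift_token Sx Sv1 Sv2 uniq_xv adj_x adj_v) _.
have -> : S :\ x :|: [set last v2 p] =
          (S :\ x :|: [set v2]) :\ v2 :|: [set last v2 p].
  by rewrite [_ :|: [set v2]]setUC setU1K // !inE negb_and Sv2 orbT.
apply: IHn => //; first by rewrite !inE eqxx orbT.
  by case/and4P: uniq_xp => _ _ /= -> ->.
move=> y p_y; rewrite !inE negb_or negb_and p_notS ?orbT /=; last first.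
  by rewrite !inE p_y !orbT.
by apply: contraTneq p_y => ->; case/and4P: uniq_xp => _ _ ->.
Qed.

Lemma chain_swap S nu nu' inner :
  uniq (nu :: rcons inner nu') -> path adjb nu (rcons inner nu') ->
  (forall y, y \in inner -> y \notin S) -> odd (size inner) ->
  nu \in S -> nu' \notin S ->
  pm_equiv (of_sat S) (of_sat (S :\ nu :|: [set nu'])).
Proof.
move=> uniq_p path_p inner_notS odd_inner S_nu S_nu'.
rewrite -(last_rcons nu inner nu'); apply: move_token_even => //.
  by move=> y; rewrite mem_rcons inE => /predU1P[->|/inner_notS].
by rewrite size_rcons /= negbK.
Qed.

Lemma chain_kill S nu nu' inner :
  uniq (nu :: rcons inner nu') -> path adjb nu (rcons inner nu') ->
  (forall y, y \in inner -> y \notin S) -> ~~ odd (size inner) ->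
  nu \in S -> nu' \in S ->
  pm_equiv (of_sat S) (of_sat (S :\: [set nu; nu'])).
Proof.
move=> uniq_p path_p inner_notS even_inner S_nu S_nu'.
have uniq_inner : uniq (nu :: inner).
  by apply: subseq_uniq uniq_p; rewrite -cats1 -cat_cons prefix_subseq.
move: path_p; rewrite rcons_path => /andP[path_inner adj_w].
set w := last nu inner in adj_w.
have nu'_neq_nu : nu' != nu.
  by move: uniq_p; rewrite /= mem_rcons inE negb_or eq_sym => /andP[/andP[]].
have w_notS : w \notin S :\ nu.
  rewrite /w !inE negb_and negbK.
  case/predU1P: (mem_last nu inner) => [->|/inner_notS->].
    by rewrite eqxx.
  by rewrite orbT.
apply: rt_trans
  (move_token_even S_nu path_inner uniq_inner inner_notS even_inner) _.
have -> : S :\: [set nu; nu'] = (S :\ nu :|: [set w]) :\: [set w; nu'].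
  apply/setP => z; rewrite !inE; move: w_notS; rewrite !inE.
  have [-> /=|_ _] := eqVneq z w.
    by case: (w =P nu) => //= _ /negbTE->; rewrite andbF.
  by rewrite /= orbF negb_or andbA (andbC (z != nu)).
by apply: remove_edge adj_w; rewrite !inE ?S_nu' ?eqxx ?orbT ?nu'_neq_nu.
Qed.

End ChainMoves.

Theorem lemma5p10 (k : nat) (hk : 1 <= k) (phi : boolfun k)
  (nu nu' : valuation k) (inner : seq (valuation k)) :
  nu != nu' ->
  simple_path nu nu' inner ->
  (forall mu, mu \in inner -> mu \notin sat phi) ->
  (* Chainkilling *)
  (odd #|nu| != odd #|nu'| -> nu \in sat phi -> nu' \in sat phi ->
     forall phi' : boolfun k, sat phi' = sat phi :\: [set nu; nu'] ->
     pm_equiv phi phi')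
  /\
  (* Chainswapping *)
  (odd #|nu| = odd #|nu'| -> nu \in sat phi -> nu' \notin sat phi ->
     forall phi' : boolfun k, sat phi' = (sat phi :\ nu) :|: [set nu'] ->
     pm_equiv phi phi').
Proof.
(* [nu != nu'] follows from the path being simple. *)
move=> _ /simple_pathP[uniq_p path_p] inner_notS.
have odd_nu' := odd_last_path path_p.
rewrite last_rcons size_rcons /= in odd_nu'.
rewrite odd_nu'; split=> parity S_nu S_nu' phi' def_phi';
  rewrite -[phi]satK -[phi']satK def_phi'.
- apply: (chain_kill uniq_p path_p inner_notS) => //.
  by move: parity; case: (odd #|nu|); case: (odd (size inner)).
- apply: (chain_swap uniq_p path_p inner_notS) => //.
  by move: parity; case: (odd #|nu|); case: (odd (size inner)).
Qed.
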